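(* Let $p\ge2$ and consider the weighted acyclic directed graph described in the context, with sources $A_k$ and sinks $B_k$. For every $m\in\{0,\ldots,p-1\}$ and $n\in\mathbb N$, there is a unique configuration of pairwise vertex-disjoint (non-intersecting) directed paths connecting the sources $A_m,A_{m+1},\ldots,A_{m+n}$ to the sinks $B_0,B_1,\ldots,B_n$: for each $i\in\{0,\ldots,n\}$, the source $A_{m+i}$ is connected to the sink $B_i$ by the highest possible path, which passes through $(-m,m+ip)$. The weight of this configuration is $\prod_{i=0}^n\prod_{j=1}^{ip+m}V_j$.
   Context: Let $p\ge2$ and let $(V_l)_{l\ge1}$ be formal variables. Consider the directed graph whose vertices are the $(k,l)\in\mathbb Z\times\mathbb N$ with $k+l\equiv0 \pmod p$, whose edges are the rises $(k,l)\to(k+1,l+p-1)$, of weight $1$, and the falls $(k,l)\to(k+1,l-1)$ (for $l\ge1$), of weight $V_l$; the weight of a path is the product of its edge weights and the weight of a configuration of paths is the product of the path weights. For $k\in\mathbb N$ let $q_k=\lfloor k/(p-1)\rfloor$ and $r_k=k-(p-1)q_k$, and set $A_k:=(-k-q_k,r_k)=(-pq_k-r_k,r_k)$ and $B_k:=(kp,0)$. *)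

From mathcomp Require Import all_boot all_order all_algebra.
Set Implicit Arguments. Unset Strict Implicit. Unset Printing Implicit Defensive.
Import Order.TTheory GRing.Theory Num.Theory.

Definition vtx := (int * nat)%type.

Local Open Scope ring_scope.

Definition is_vertex (p : nat) (v : vtx) : bool :=
  ((v.1 + (v.2)%:Z) %% (p%:Z))%Z == 0.

Definition is_rise (p : nat) (u v : vtx) : bool :=
  (v.1 == u.1 + 1) && (v.2 == (u.2 + p.-1)%N).

Definition is_fall (u v : vtx) : bool :=
  (v.1 == u.1 + 1) && (1 <= u.2)%N && (v.2 == u.2.-1).

Definition edge (p : nat) : rel vtx :=
  fun u v => [&& is_vertex p u, is_vertex p v & is_rise p u v || is_fall u v].

Definition eweight (R : comPzRingType) (V : nat -> R) (p : nat) (u v : vtx) : R :=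
  if is_rise p u v then 1 else V u.2.

(* A path starting at a is encoded by the list s of the vertices after a;
   its vertex list is a :: s. *)
Definition is_path_from_to (p : nat) (a b : vtx) (s : seq vtx) : bool :=
  is_vertex p a && path (edge p) a s && (last a s == b).

Definition pweight (R : comPzRingType) (V : nat -> R) (p : nat) (a : vtx) (s : seq vtx) : R :=
  \prod_(e <- zip (a :: s) s) eweight V p e.1 e.2.

Definition qk (p k : nat) : nat := (k %/ p.-1)%N.
Definition rk (p k : nat) : nat := (k - p.-1 * qk p k)%N.

Definition Asrc (p k : nat) : vtx := (- ((k + qk p k)%N)%:Z, rk p k).
Definition Bsnk (p k : nat) : vtx := ((k * p)%N%:Z, 0%N).

Definition nonint_config (p m n : nat) (P : 'I_n.+1 -> seq vtx) : Prop :=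
  (forall i : 'I_n.+1, exists j : 'I_n.+1,
      is_path_from_to p (Asrc p (m + i)) (Bsnk p j) (P i)) /\
  (forall i i' : 'I_n.+1, i != i' ->
      last (Asrc p (m + i)) (P i) != last (Asrc p (m + i')) (P i')) /\
  (forall i i' : 'I_n.+1, i != i' ->
      forall v, v \in Asrc p (m + i) :: P i -> v \notin Asrc p (m + i') :: P i').

(* s is the highest path from a to b: every path from a to b lies weakly below
   it (paths advance the first coordinate by 1 at each step, so the j-th vertices
   of two paths from a have the same first coordinate). *)
Definition highest_path (p : nat) (a b : vtx) (s : seq vtx) : Prop :=
  is_path_from_to p a b s /\
  forall t, is_path_from_to p a b t ->
    forall j, ((nth a (a :: t) j).2 <= (nth a (a :: s) j).2)%N.

Arguments nonint_config : clear implicits.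
Arguments highest_path : clear implicits.
Arguments is_path_from_to : clear implicits.

(* Every edge moves one column to the right and changes the height by [p - 1] or
   [-1], so the diagonal [k + l] never decreases.  The source [A_(m+i)] lies
   [i + q_(m+i)] columns left of the column [k = -m]; rising all the way brings it to
   [(-m, m + i p)], the highest point it can reach there, and falling all the way then
   brings it to [B_i].  Any path from [A_(m+i)] meets the column at some [(-m, m + t p)]
   with [t <= i].  In a non-intersecting configuration the points with [t < i] are
   occupied by the paths from the [A_(m+t)], so by induction the [i]-th path passes
   through the top point; its sink [B_j] then satisfies [j >= i], injectivity of the
   sinks forces [j = i], and the path is the straight rise followed by the straight
   fall, of weight [V_1 ... V_(m+ip)]. *)

From mathcomp Require Import all_boot all_order all_algebra zify.
Import GRing.Theory Num.Theory.

Set Implicit Arguments.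
Unset Strict Implicit.
Unset Printing Implicit Defensive.
Local Open Scope ring_scope.

Lemma ord_inj_ge_id n (f : 'I_n -> 'I_n) :
  injective f -> (forall i : 'I_n, (i <= f i)%N) -> f =1 id.
Proof.
move=> f_inj ge_f i.
have sum_f : \sum_(i < n) (f i : nat) = \sum_(i < n) (i : nat).
  by rewrite [RHS](reindex_inj f_inj).
have [_] := leqif_sum (P := xpredT) (fun i _ => leqif_eq (ge_f i)).
by rewrite sum_f eqxx => /esym/forallP/(_ i)/eqP/val_inj.
Qed.

Section Paths.
Variable p : nat.

Lemma edge_shift u v : edge p u v ->
  [/\ v.1 = u.1 + 1, (v.2 <= u.2 + p.-1)%N, (u.2 <= v.2 + 1)%N
    & u.1 + (u.2)%:Z <= v.1 + (v.2)%:Z].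
Proof.
case/and3P => _ _ /orP [/andP [/eqP -> /eqP ->] | /andP [/andP [/eqP -> u_pos] /eqP ->]];
  split; lia.
Qed.

Lemma path_nth_shift a s j d : path (edge p) a s -> (j + d <= size s)%N ->
  let u := nth a (a :: s) j in let w := nth a (a :: s) (j + d) in
  [/\ w.1 = u.1 + d%:Z, (w.2 <= u.2 + d * p.-1)%N, (u.2 <= w.2 + d)%N
    & u.1 + (u.2)%:Z <= w.1 + (w.2)%:Z].
Proof.
move=> /(pathP a) s_edge; elim: d => [|d IHd] le_s /=.
  by rewrite addn0; split; lia.
have [|w1 w2 w3 w4] := IHd; first lia.
have /edge_shift[e1 e2 e3 e4] : edge p (nth a (a :: s) (j + d)) (nth a (a :: s) (j + d.+1)).
  by rewrite addnS; apply: s_edge; lia.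
by rewrite mulSn; split; lia.
Qed.

Lemma path_nth_vertex a s j : is_vertex p a -> path (edge p) a s -> (j <= size s)%N ->
  is_vertex p (nth a (a :: s) j).
Proof.
move=> a_vtx /(pathP a) s_edge; case: j => [|j] // le_js.
by case/and3P: (s_edge j le_js).
Qed.

Lemma path_nth_fst a s j : path (edge p) a s -> (j <= size s)%N ->
  (nth a (a :: s) j).1 = a.1 + j%:Z.
Proof. by move=> s_path /(path_nth_shift (j := 0) s_path)[]. Qed.

Lemma size_path_from_to a b s : is_path_from_to p a b s -> (size s)%:Z = b.1 - a.1.
Proof.
case/andP=> /andP[_ s_path] /eqP s_last.
have [+ _ _ _] := path_nth_shift (j := 0) (d := size s) s_path (leqnn (size s)).
by rewrite add0n /= -(last_nth a) s_last; lia.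
Qed.

Lemma last_path_from_to a b s : is_path_from_to p a b s -> last a s = b.
Proof. by case/andP=> _ /eqP. Qed.

Lemma pweightE (R : comPzRingType) (V : nat -> R) a s :
  pweight V p a s = \prod_(0 <= j < size s) eweight V p (nth a (a :: s) j) (nth a s j).
Proof.
rewrite /pweight (big_nth (a, a)) size_zip /= (minn_idPr (leqnSn _)).
apply: eq_big_nat => j /andP[_ lt_js].
by rewrite nth_zip_cond size_zip /= (minn_idPr (leqnSn _)) lt_js.
Qed.

End Paths.

Lemma is_vertex_diag_shift p u v (c : int) : is_vertex p u ->
  v.1 + (v.2)%:Z = c * p%:Z + (u.1 + (u.2)%:Z) -> is_vertex p v.
Proof. by rewrite /is_vertex => u_vtx ->; rewrite modzMDl. Qed.

Section RiseFall.
Variables (p : nat) (a : vtx) (T H : nat).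
Local Notation top := (a.2 + T * p.-1)%N.

Definition rise_fall_vtx j : vtx :=
  (a.1 + j%:Z, if (j <= T)%N then (a.2 + j * p.-1)%N else (top - (j - T))%N).

Definition rise_fall_path : seq vtx := mkseq (fun j => rise_fall_vtx j.+1) (T + H).

Lemma size_rise_fall_path : size rise_fall_path = (T + H)%N.
Proof. exact: size_mkseq. Qed.

Lemma nth_rise_fall_path j : (j <= T + H)%N ->
  nth a (a :: rise_fall_path) j = rise_fall_vtx j.
Proof.
case: j => [|j] le_j /=; last by rewrite nth_mkseq.
by rewrite /rise_fall_vtx addr0 mul0n addn0; case: a.
Qed.

Lemma rise_fall_vtx_low j : (j <= T)%N ->
  rise_fall_vtx j = (a.1 + j%:Z, (a.2 + j * p.-1)%N).
Proof. by rewrite /rise_fall_vtx => ->. Qed.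

Lemma rise_fall_vtx_high j : (T <= j)%N ->
  rise_fall_vtx j = (a.1 + j%:Z, (top - (j - T))%N).
Proof.
rewrite /rise_fall_vtx leq_eqVlt => /predU1P[<- | lt_Tj].
  by rewrite leqnn subnn subn0.
by rewrite leqNgt lt_Tj.
Qed.

Lemma last_rise_fall_path : last a rise_fall_path = (a.1 + (T + H)%N%:Z, (top - H)%N).
Proof.
rewrite (last_nth a) size_rise_fall_path nth_rise_fall_path //.
by rewrite rise_fall_vtx_high ?leq_addr // addKn.
Qed.

Hypothesis H_le_top : (H <= top)%N.

Lemma eweight_rise_fall_path (R : comPzRingType) (V : nat -> R) j : (j < T + H)%N ->
  eweight V p (nth a (a :: rise_fall_path) j) (nth a rise_fall_path j)
    = if (j < T)%N then 1 else V (top - (j - T))%N.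
Proof.
move=> lt_j.
rewrite -[nth a rise_fall_path j]/(nth a (a :: rise_fall_path) j.+1).
rewrite !nth_rise_fall_path ?(ltnW lt_j) //.
rewrite /eweight /is_rise; case: ltnP => [lt_jT | le_Tj].
  rewrite !rise_fall_vtx_low ?(ltnW lt_jT) //=.
  by case: eqP => [_|]; case: eqP => //= *; exfalso; lia.
rewrite !rise_fall_vtx_high ?(leqW le_Tj) //=.
by case: eqP => [_|]; case: eqP => //= *; exfalso; lia.
Qed.

Lemma rise_fall_path_weight (R : comPzRingType) (V : nat -> R) :
  pweight V p a rise_fall_path = \prod_((top - H).+1 <= j < top.+1) V j.
Proof.
rewrite pweightE size_rise_fall_path.
rewrite (eq_big_nat _ _ (fun j lt_j => eweight_rise_fall_path V (proj2 (andP lt_j)))).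
rewrite (big_cat_nat _ (n := T)) ?leq_addr //= big1_seq ?mul1r; last first.
  by move=> j; rewrite mem_index_iota => /andP[_ /andP[_ ->]].
rewrite -{1}(add0n T) big_addn addKn -{1}(add0n (top - H).+1) big_addn.
rewrite subSS subKn // big_nat_rev add0n.
apply: eq_big_nat => j /andP[_ lt_jH]; rewrite addnK ltnNge leq_addl /=; congr V; lia.
Qed.

Lemma rise_fall_vtx_vertex j : (0 < p)%N -> is_vertex p a -> (j <= T + H)%N ->
  is_vertex p (rise_fall_vtx j).
Proof.
move=> p_gt0 a_vtx le_j; have [le_jT | lt_Tj] := leqP j T.
  by apply: (is_vertex_diag_shift (c := j%:Z) a_vtx); rewrite rise_fall_vtx_low //=; nia.
apply: (is_vertex_diag_shift (c := T%:Z) a_vtx).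
by rewrite rise_fall_vtx_high ?(ltnW lt_Tj) //=; nia.
Qed.

Lemma rise_fall_path_path : (0 < p)%N -> is_vertex p a -> path (edge p) a rise_fall_path.
Proof.
move=> p_gt0 a_vtx; apply/(pathP a) => j; rewrite size_rise_fall_path => lt_j.
rewrite -[nth a rise_fall_path j]/(nth a (a :: rise_fall_path) j.+1).
rewrite !nth_rise_fall_path ?(ltnW lt_j) //.
apply/and3P; split; rewrite ?rise_fall_vtx_vertex ?(ltnW lt_j) //.
have [lt_jT | le_Tj] := ltnP j T.
  rewrite !rise_fall_vtx_low ?(ltnW lt_jT) //.
  by apply/orP; left; apply/andP; split; apply/eqP => /=; lia.
rewrite !rise_fall_vtx_high ?(leqW le_Tj) //.
by apply/orP; right; apply/andP; split;
  [apply/andP; split; [apply/eqP|] | apply/eqP] => /=; lia.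
Qed.

Lemma rise_fall_path_above t j : path (edge p) a t -> size t = (T + H)%N ->
  ((last a t).2 <= top - H)%N ->
  ((nth a (a :: t) j).2 <= (nth a (a :: rise_fall_path) j).2)%N.
Proof.
move=> t_path size_t le_last.
have [le_j | lt_j] := leqP j (T + H); last first.
  by rewrite !nth_default //= ?size_rise_fall_path ?size_t.
rewrite nth_rise_fall_path //; have [le_jT | lt_Tj] := leqP j T.
  have [_ + _ _] := path_nth_shift (j := 0) (d := j) t_path ltac:(lia).
  by rewrite rise_fall_vtx_low.
have [_ _ + _] := path_nth_shift (j := j) (d := T + H - j) t_path ltac:(lia).
rewrite subnKC // -size_t -last_nth rise_fall_vtx_high ?(ltnW lt_Tj) //=; lia.
Qed.

Lemma rise_fall_path_unique t : path (edge p) a t -> size t = (T + H)%N ->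
  ((last a t).2 <= top - H)%N -> (nth a (a :: t) T).2 = top -> t = rise_fall_path.
Proof.
move=> t_path size_t le_last t_top.
apply: (@eq_from_nth _ a); rewrite ?size_rise_fall_path // => j lt_j.
rewrite -[nth a t j]/(nth a (a :: t) j.+1) -[nth a rise_fall_path j]/(nth a (a :: _) j.+1).
have := rise_fall_path_above j.+1 t_path size_t le_last.
have := path_nth_fst t_path lt_j.
rewrite nth_rise_fall_path -?size_t //; have [le_jT | lt_Tj] := leqP j.+1 T.
  have [_ + _ _] := path_nth_shift (j := j.+1) (d := T - j.+1) t_path ltac:(lia).
  rewrite subnKC // t_top rise_fall_vtx_low //.
  by case: (nth _ _ _) => k l /= ge_l -> le_l; congr pair; nia.
have [_ _ + _] := path_nth_shift (j := T) (d := j.+1 - T) t_path ltac:(lia).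
rewrite subnKC ?(ltnW lt_Tj) // t_top rise_fall_vtx_high ?(ltnW lt_Tj) //.
by case: (nth _ _ _) => k l /= ge_l -> le_l; congr pair; lia.
Qed.

End RiseFall.

Lemma rk_qk p k : (rk p k + qk p k * p.-1)%N = k.
Proof. by rewrite /rk /qk mulnC subnK // leq_trunc_div. Qed.

Lemma Asrc_vertex p k : is_vertex p (Asrc p k).
Proof.
apply: (is_vertex_diag_shift (u := (0, 0%N)) (c := - (qk p k)%:Z)).
  by rewrite /is_vertex /= mod0z.
case: p => [|p]; first by rewrite /Asrc /rk /qk divn0 /=; lia.
have := rk_qk p.+1 k; rewrite /Asrc /=; nia.
Qed.

Lemma Bsnk_inj p : (0 < p)%N -> injective (Bsnk p).
Proof. by move=> p_gt0 j j' [] /eqP; rewrite eqn_pmul2r // => /eqP. Qed.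

Section TopPaths.
Variables (p m : nat).
Hypotheses (p_gt1 : (1 < p)%N) (m_lt_p : (m <= p.-1)%N).
Local Notation A i := (Asrc p (m + i)).

Definition cross_time i := (i + qk p (m + i))%N.

Lemma Asrc_cross_time i : (A i).1 + (cross_time i)%:Z = - m%:Z.
Proof. by rewrite /Asrc /cross_time /=; lia. Qed.

Lemma Asrc_top i : ((A i).2 + cross_time i * p.-1)%N = (m + i * p)%N.
Proof. by have := rk_qk p (m + i); rewrite /cross_time /=; nia. Qed.

Definition top_path i := rise_fall_path p (A i) (cross_time i) (m + i * p).

Lemma size_top_path i : size (top_path i) = (cross_time i + (m + i * p))%N.
Proof. exact: size_rise_fall_path. Qed.

Lemma top_path_from_to i : is_path_from_to p (A i) (Bsnk p i) (top_path i).
Proof.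
rewrite /is_path_from_to Asrc_vertex /=.
rewrite rise_fall_path_path ?Asrc_top ?Asrc_vertex ?(ltnW p_gt1) //=.
rewrite last_rise_fall_path Asrc_top subnn /Bsnk; apply/eqP; congr pair.
by have := Asrc_cross_time i; lia.
Qed.

Lemma nth_top_path_cross_time i :
  nth (A i) (A i :: top_path i) (cross_time i) = (- m%:Z, (m + i * p)%N).
Proof.
rewrite nth_rise_fall_path ?leq_addr // rise_fall_vtx_low //.
by rewrite Asrc_cross_time Asrc_top.
Qed.

Lemma last_top_path i : last (A i) (top_path i) = Bsnk p i.
Proof. exact: last_path_from_to (top_path_from_to i). Qed.

Lemma size_path_to_Bsnk i j s : is_path_from_to p (A i) (Bsnk p j) s ->
  size s = (cross_time i + (m + j * p))%N.
Proof. by move/size_path_from_to; have := Asrc_cross_time i; rewrite /Bsnk /=; lia. Qed.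

Lemma top_path_highest i : highest_path p (A i) (Bsnk p i) (top_path i).
Proof.
split=> [|t t_from_to j]; first exact: top_path_from_to.
have size_t := size_path_to_Bsnk t_from_to.
case/andP: t_from_to => /andP[_ t_path] /eqP t_last.
by apply: rise_fall_path_above; rewrite ?t_last ?Asrc_top ?subnn.
Qed.

Lemma cross_mem_top_path i : (- m%:Z, (m + i * p)%N) \in A i :: top_path i.
Proof.
by rewrite -nth_top_path_cross_time mem_nth //= size_top_path ltnS leq_addr.
Qed.

Lemma top_path_weight (R : comPzRingType) (V : nat -> R) i :
  pweight V p (A i) (top_path i) = \prod_(1 <= j < (i * p + m).+1) V j.
Proof. by rewrite rise_fall_path_weight Asrc_top ?subnn // addnC. Qed.

(* The line through [v] of slope [p - 1] to the left of the column [k = -m], or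
   of slope [-1] to its right, meets the column at height [m + crossing_height v];
   on the [i]-th top path this is [m + i * p]. *)
Definition crossing_height (v : vtx) : int :=
  if v.1 <= - m%:Z then v.2%:Z - p.-1%:Z * (v.1 + m%:Z) - m%:Z else v.1 + v.2%:Z.

Lemma crossing_height_top_path i v : v \in A i :: top_path i ->
  crossing_height v = (i * p)%N%:Z.
Proof.
case/(nthP (A i)) => j; rewrite /= ltnS size_top_path => le_j <-.
rewrite nth_rise_fall_path // /crossing_height.
have := Asrc_cross_time i; have := Asrc_top i.
have [le_jT | lt_Tj] := leqP j (cross_time i).
  rewrite rise_fall_vtx_low //=; case: ifP => /= [_|]; nia.
rewrite rise_fall_vtx_high ?(ltnW lt_Tj) //=; case: ifP => /= [|_]; nia.
Qed.

Variable n : nat.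

Lemma top_path_config : nonint_config p m n (fun i => top_path i).
Proof.
split=> [i|]; first by exists i; exact: top_path_from_to.
have p_gt0 : (0 < p)%N by exact: ltnW.
split=> i i' neq_ii'.
  rewrite !last_top_path; apply: contra neq_ii' => /eqP/Bsnk_inj eq_ii'.
  by apply/eqP/val_inj/eq_ii'.
move=> v /crossing_height_top_path v_i; apply: contra neq_ii'.
move=> /crossing_height_top_path; rewrite v_i => /eqP; rewrite eqz_nat eqn_pmul2r //.
Qed.

Lemma cross_time_le_size i j s : is_path_from_to p (A i) (Bsnk p j) s ->
  (cross_time i <= size s)%N.
Proof. by move/size_path_to_Bsnk=> ->; rewrite leq_addr. Qed.

Lemma column_vertex l : is_vertex p (- m%:Z, l) -> exists t, l = (m + t * p)%N.
Proof.
rewrite /is_vertex => /eqP/dvdz_mod0P/dvdzP[/= c eq_c].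
have c_ge0 : 0 <= c by nia.
by case: c c_ge0 eq_c => // t _ eq_t; exists t; lia.
Qed.

Lemma path_cross_column i j s : is_path_from_to p (A i) (Bsnk p j) s ->
  exists2 t, (t <= i)%N & nth (A i) (A i :: s) (cross_time i) = (- m%:Z, (m + t * p)%N).
Proof.
move=> s_from_to; have le_Ts := cross_time_le_size s_from_to.
case/andP: s_from_to => /andP[A_vtx s_path] _.
have := path_nth_vertex A_vtx s_path le_Ts.
have [] := path_nth_shift (j := 0) (d := cross_time i) s_path le_Ts.
rewrite add0n /= Asrc_top; case: (nth _ _ _) => k l /= -> le_l _ _.
rewrite Asrc_cross_time => /column_vertex[t eq_l]; exists t; last by rewrite eq_l.
by move: le_l; rewrite eq_l leq_add2l leq_pmul2r // ltnW.
Qed.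

Lemma sink_ge_of_cross i j s : is_path_from_to p (A i) (Bsnk p j) s ->
  nth (A i) (A i :: s) (cross_time i) = (- m%:Z, (m + i * p)%N) -> (i <= j)%N.
Proof.
move=> s_from_to s_cross; have le_Ts := cross_time_le_size s_from_to.
case/andP: s_from_to => /andP[_ s_path] /eqP s_last.
have [_ _ _] := path_nth_shift (j := cross_time i) (d := size s - cross_time i) s_path
  ltac:(by rewrite subnKC).
rewrite subnKC // -last_nth s_last s_cross /= => diag.
by rewrite -(leq_pmul2r (ltnW p_gt1)); lia.
Qed.

Variable P : 'I_n.+1 -> seq vtx.
Hypothesis P_config : nonint_config p m n P.

(* By induction on [i]: the lower crossing points [(-m, m + t * p)], [t < i], are
   already taken by the paths [t]. *)
Lemma config_cross (i : 'I_n.+1) :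
  nth (A i) (A i :: P i) (cross_time i) = (- m%:Z, (m + i * p)%N).
Proof.
case: P_config => P_from_to [_ P_disjoint].
move: {2}(val i) (erefl (val i)) => k; elim/ltn_ind: k i => k IH i i_k; subst k.
have [j i_from_to] := P_from_to i.
have [t le_ti cross_t] := path_cross_column i_from_to.
case: (ltngtP t i) le_ti => [lt_ti _ | // | eq_ti _]; last by rewrite cross_t eq_ti.
pose t' : 'I_n.+1 := Ordinal (ltn_trans lt_ti (ltn_ord i)).
have [j' t'_from_to] := P_from_to t'.
have neq_t'i : t' != i by rewrite -val_eqE /= ltn_eqF.
have cross_in_t' : (- m%:Z, (m + t * p)%N) \in A t' :: P t'.
  by rewrite -(IH t lt_ti t') // mem_nth // ltnS (cross_time_le_size t'_from_to).
have cross_in_i : (- m%:Z, (m + t * p)%N) \in A i :: P i.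
  by rewrite -cross_t mem_nth // ltnS (cross_time_le_size i_from_to).
by have := P_disjoint t' i neq_t'i _ cross_in_t'; rewrite cross_in_i.
Qed.

Lemma config_sink (i : 'I_n.+1) : last (A i) (P i) = Bsnk p i.
Proof.
case: P_config => P_from_to [P_last _].
have [f f_from_to] := fin_all_exists P_from_to.
suff f_id : f =1 id by rewrite (last_path_from_to (f_from_to i)) f_id.
apply: ord_inj_ge_id => [i1 i2 eq_f | i1].
  case: (eqVneq i1 i2) => // /P_last.
  by rewrite !(last_path_from_to (f_from_to _)) eq_f eqxx.
exact: sink_ge_of_cross (f_from_to i1) (config_cross i1).
Qed.

Lemma config_eq_top_path i : P i = top_path i.
Proof.
have [j i_from_to] := P_config.1 i.
have eq_j : Bsnk p j = Bsnk p i by rewrite -(last_path_from_to i_from_to) config_sink.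
rewrite eq_j in i_from_to; have size_i := size_path_to_Bsnk i_from_to.
case/andP: i_from_to => /andP[_ i_path] _.
by apply: rise_fall_path_unique; rewrite ?Asrc_top ?config_sink ?subnn ?config_cross.
Qed.

End TopPaths.

Theorem proposition2 (R : comPzRingType) (V : nat -> R) (p m n : nat) :
  (2 <= p)%N -> (m <= p.-1)%N ->
  exists P : 'I_n.+1 -> seq vtx,
    nonint_config p m n P /\
    (forall P' : 'I_n.+1 -> seq vtx, nonint_config p m n P' -> forall i, P' i = P i) /\
    (forall i : 'I_n.+1,
       highest_path p (Asrc p (m + i)) (Bsnk p i) (P i) /\
       ((- (m%:Z))%R, (m + i * p)%N) \in Asrc p (m + i) :: P i) /\
    \prod_(i < n.+1) pweight V p (Asrc p (m + i)) (P i)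
      = \prod_(i < n.+1) \prod_(1 <= j < (i * p + m).+1) V j.
Proof.
move=> p_gt1 m_le; exists (fun i => top_path p m i).
split; first exact: top_path_config.
split; first by move=> P' P'_config i; exact: config_eq_top_path.
split; first by move=> i; split; [exact: top_path_highest | exact: cross_mem_top_path].
by apply: eq_bigr => i _; rewrite top_path_weight.
Qed.
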